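(* Let $G$ be a finite simple graph. Then: (1) $G\in\mathcal{G}_0$ if and only if $G$ is a disjoint union of cliques. (2) $G\in\mathcal{G}_1$ if and only if $G$ is a comparability graph. (3) $G\in\mathcal{G}_2$ if and only if $G$ is an upper bound graph. (4) $G\in\mathcal{G}_{3'}$ if and only if $G$ is a half-closed upper bound graph. (5) $G\in\mathcal{G}_{3''}$ if and only if $G$ is a fully-closed upper bound graph. (6) $G\in\mathcal{G}_4$ if and only if $G$ is an extended-closed upper bound graph.
   Context: A finite topology $\tau$ on a finite set $X$ is a family of subsets of $X$ (the open sets) containing $\emptyset$ and $X$ and closed under unions and intersections; complements of open sets are closed sets. For distinct $x,y\in X$: - $x,y$ are $T_0$-separated if there is an open $U$ containing exactly one of $x,y$; - $T_1$-separated if there are open $U_x,U_y$ with $x\in U_x$, $y\notin U_x$, $y\in U_y$, $x\notin U_y$; - $T_2$-separated if there are disjoint open $U_x\ni x$, $U_y\ni y$; - $T_{3'}$-separated if (a) there exist a closed set $J$ and open sets $U_J,U_y$ with $x\in J\subseteq U_J$, $y\in U_y$, $U_J\cap U_y=\emptyset$, OR (b) there exist a closed set $K$ and open sets $U_x,U_K$ with $x\in U_x$, $y\in K\subseteq U_K$, $U_x\cap U_K=\emptyset$; - $T_{3''}$-separated if both (a) AND (b) hold; - $T_4$-separated if there exist closed sets $J,K$ and disjoint open sets $U_J,U_K$ with $x\in J\subseteq U_J$, $y\in K\subseteq U_K$. For $i\in\{0,1,2,3',3'',4\}$, $G_i(\tau)$ is the simple graph with vertex set $X$ in which distinct $x,y$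 are adjacent iff they are not $T_i$-separated, and $\mathcal{G}_i$ is the class of graphs isomorphic to $G_i(\tau)$ for some finite topology $\tau$. For a finite poset $P=(X,\le)$, define graphs on vertex set $X$ where distinct $x,y$ are adjacent iff: comparability graph: $x\le y$ or $y\le x$; upper bound graph: there is $z$ with $x\le z$ and $y\le z$; half-closed upper bound graph: there exist $a,b$ with $a\le x$, $a\le b$, $y\le b$ AND there exist $\alpha,\beta$ with $\alpha\le y$, $\alpha\le\beta$, $x\le\beta$; fully-closed upper bound graph: the same with OR in place of AND; extended-closed upper bound graph: there exist $a,b,c$ with $a\le x$, $b\le y$, $a\le c$, $b\le c$. A graph is a comparability graph (resp. upper bound graph, etc.) if it is isomorphic to the comparability graph (resp. upper bound graph, etc.) of some finite poset. *)

From mathcomp Require Import all_boot.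
Set Implicit Arguments. Unset Strict Implicit. Unset Printing Implicit Defensive.

Definition simple_graph (T : finType) (e : T -> T -> Prop) : Prop :=
  (forall x, ~ e x x) /\ (forall x y, e x y -> e y x).

Definition graph_iso (T1 T2 : finType) (e1 : T1 -> T1 -> Prop)
    (e2 : T2 -> T2 -> Prop) : Prop :=
  exists f : T1 -> T2, bijective f /\ forall x y, e1 x y <-> e2 (f x) (f y).

(* Disjoint union of cliques: vertices are labelled by components,
   distinct vertices adjacent iff they carry the same label. *)
Definition disjoint_union_of_cliques (T : finType) (e : T -> T -> Prop) : Prop :=
  exists c : T -> nat, forall x y, x <> y -> (e x y <-> c x = c y).

Definition is_topology (X : finType) (tau : {set {set X}}) : Prop :=
  set0 \in tau /\ setT \in tau /\
  (forall U V, U \in tau -> V \in tau -> (U :|: V \in tau) /\ (U :&: V \in tau)).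

Definition opn (X : finType) (tau : {set {set X}}) (U : {set X}) := U \in tau.
Definition cls (X : finType) (tau : {set {set X}}) (J : {set X}) := ~: J \in tau.

Section Sep.
Variables (X : finType) (tau : {set {set X}}).

Definition T0_sep (x y : X) : Prop :=
  exists U, opn tau U /\ ((x \in U /\ y \notin U) \/ (y \in U /\ x \notin U)).

Definition T1_sep (x y : X) : Prop :=
  exists Ux Uy, opn tau Ux /\ opn tau Uy /\
    x \in Ux /\ y \notin Ux /\ y \in Uy /\ x \notin Uy.

Definition T2_sep (x y : X) : Prop :=
  exists Ux Uy, opn tau Ux /\ opn tau Uy /\
    x \in Ux /\ y \in Uy /\ Ux :&: Uy = set0.

Definition T3a_sep (x y : X) : Prop :=
  exists J UJ Uy, cls tau J /\ opn tau UJ /\ opn tau Uy /\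
    x \in J /\ J \subset UJ /\ y \in Uy /\ UJ :&: Uy = set0.

Definition T3b_sep (x y : X) : Prop :=
  exists K Ux UK, cls tau K /\ opn tau Ux /\ opn tau UK /\
    x \in Ux /\ y \in K /\ K \subset UK /\ Ux :&: UK = set0.

Definition T3'_sep (x y : X) : Prop := T3a_sep x y \/ T3b_sep x y.
Definition T3''_sep (x y : X) : Prop := T3a_sep x y /\ T3b_sep x y.

Definition T4_sep (x y : X) : Prop :=
  exists J K UJ UK, cls tau J /\ cls tau K /\ opn tau UJ /\ opn tau UK /\
    x \in J /\ J \subset UJ /\ y \in K /\ K \subset UK /\ UJ :&: UK = set0.
End Sep.

Inductive sep_axiom := ST0 | ST1 | ST2 | ST3' | ST3'' | ST4.

Definition sep (i : sep_axiom) (X : finType) (tau : {set {set X}}) : X -> X -> Prop :=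
  match i with
  | ST0 => T0_sep tau | ST1 => T1_sep tau | ST2 => T2_sep tau
  | ST3' => T3'_sep tau | ST3'' => T3''_sep tau | ST4 => T4_sep tau
  end.

Definition sep_graph (i : sep_axiom) (X : finType) (tau : {set {set X}})
    (x y : X) : Prop := x <> y /\ ~ sep i tau x y.

Definition in_Gclass (i : sep_axiom) (T : finType) (e : T -> T -> Prop) : Prop :=
  exists (X : finType) (tau : {set {set X}}),
    is_topology tau /\ graph_iso e (sep_graph i tau).

Definition is_poset (X : finType) (le : rel X) : Prop :=
  reflexive le /\ antisymmetric le /\ transitive le.

Section PosetGraphs.
Variables (X : finType) (le : rel X).

Definition comparability_graph (x y : X) : Prop :=
  x <> y /\ (le x y \/ le y x).

Definition ub_graph (x y : X) : Prop :=
  x <> y /\ exists z, le x z /\ le y z.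

Definition half_closed_ub_graph (x y : X) : Prop :=
  x <> y /\
  (exists a b, le a x /\ le a b /\ le y b) /\
  (exists al be, le al y /\ le al be /\ le x be).

Definition fully_closed_ub_graph (x y : X) : Prop :=
  x <> y /\
  ((exists a b, le a x /\ le a b /\ le y b) \/
   (exists al be, le al y /\ le al be /\ le x be)).

Definition extended_closed_ub_graph (x y : X) : Prop :=
  x <> y /\ exists a b c, le a x /\ le b y /\ le a c /\ le b c.
End PosetGraphs.

Definition is_poset_graph
    (gr : forall X : finType, rel X -> X -> X -> Prop)
    (T : finType) (e : T -> T -> Prop) : Prop :=
  exists (X : finType) (le : rel X), is_poset le /\ graph_iso e (gr X le).

From mathcomp Require Import all_boot.
From Stdlib Require Import Classical FunctionalExtensionality.
Set Implicit Arguments. Unset Strict Implicit. Unset Printing Implicit Defensive.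

(* In a finite space the open sets are exactly the up-sets of the
   specialization preorder (x <= y iff every open set containing x contains
   y), and every preorder arises in this way.  Each separation property of a
   pair x, y is therefore a property of this preorder: the best closed set
   containing x is its down-set, and the best open set containing a set A is
   the up-closure of A, so two sets have disjoint open neighbourhoods iff no
   element lies above a point of each.  Hence G_i is the class of graphs that
   the corresponding rule attaches to finite preorders.  For i >= 1 the rule is
   insensitive to breaking ties inside each equivalence class of the preorder
   by a fixed linear order, which turns it into a partial order; for i = 0 the
   graph is the graph of the equivalence, a disjoint union of cliques. *)

Lemma not_not (P : Prop) : ~ ~ P <-> P.
Proof. by split; [exact: NNPP | tauto]. Qed.

Lemma not_or_not (P Q : Prop) : ~ (~ P \/ ~ Q) <-> P /\ Q.
Proof. by have := classic P; have := classic Q; tauto. Qed.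

Lemma not_and_not (P Q : Prop) : ~ (~ P /\ ~ Q) <-> P \/ Q.
Proof. by have := classic P; have := classic Q; tauto. Qed.

Definition is_preorder (X : finType) (r : rel X) : Prop :=
  reflexive r /\ transitive r.

Definition preorder_graph (i : sep_axiom) : forall X : finType, rel X -> X -> X -> Prop :=
  match i with
  | ST0 => fun X r x y => x <> y /\ r x y /\ r y x
  | ST1 => comparability_graph
  | ST2 => ub_graph
  | ST3' => half_closed_ub_graph
  | ST3'' => fully_closed_ub_graph
  | ST4 => extended_closed_ub_graph
  end.

Definition is_preorder_graph (i : sep_axiom) (T : finType) (e : T -> T -> Prop) : Prop :=
  exists (X : finType) (r : rel X), is_preorder r /\ graph_iso e (preorder_graph i r).

Lemma T3b_sep_swap (X : finType) (tau : {set {set X}}) x y :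
  T3b_sep tau x y <-> T3a_sep tau y x.
Proof.
by split=> -[K [U [V [HK [HU [HV [Hx [Hy [KV UV]]]]]]]]];
  exists K, V, U; rewrite setIC.
Qed.

Section Specialization.

Variables (X : finType) (tau : {set {set X}}).
Hypothesis tau_top : is_topology tau.

Definition specialization : rel X :=
  fun x y => [forall (U | U \in tau), (x \in U) ==> (y \in U)].

Lemma specializationP x y :
  reflect (forall U, U \in tau -> x \in U -> y \in U) (specialization x y).
Proof.
by apply: (iffP forall_inP) => H U HU; apply/implyP/H.
Qed.

Lemma specialization_refl : reflexive specialization.
Proof. by move=> x; apply/specializationP. Qed.

Lemma specialization_trans : transitive specialization.
Proof.
move=> y x z /specializationP xy /specializationP yz.
by apply/specializationP => U HU /(xy U HU); apply: yz.
Qed.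

Lemma specialization_preorder : is_preorder specialization.
Proof. by split; [exact: specialization_refl | exact: specialization_trans]. Qed.

Lemma open_upward (U : {set X}) x y :
  U \in tau -> x \in U -> specialization x y -> y \in U.
Proof. by move=> HU Hx /specializationP; apply. Qed.

Lemma closed_downward (J : {set X}) x a :
  cls tau J -> x \in J -> specialization a x -> a \in J.
Proof.
move=> HJ Hx ax; apply: contraTT Hx => Ja.
by rewrite -in_setC (open_upward HJ _ ax) // in_setC.
Qed.

Lemma principal_upset_open x : [set y | specialization x y] \in tau.
Proof.
have [_ [HT HUI]] := tau_top.
have -> : [set y | specialization x y] = \bigcap_(U | (U \in tau) && (x \in U)) U.
  apply/setP => y; rewrite inE; apply/specializationP/bigcapP => H U.
    by case/andP; apply: H.
  by move=> HU Hx; apply: H; rewrite HU Hx.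
apply: (big_ind (fun V => V \in tau)) => // [A B HA HB|U /andP[] //].
by case: (HUI A B HA HB).
Qed.

Lemma upward_closed_open (S : {set X}) :
  (forall a b, a \in S -> specialization a b -> b \in S) -> S \in tau.
Proof.
have [H0 [_ HUI]] := tau_top => HS.
have -> : S = \bigcup_(a in S) [set y | specialization a y].
  apply/setP => y; apply/idP/bigcupP => [Sy|[a Sa]].
    by exists y; rewrite // inE specialization_refl.
  by rewrite inE; apply: HS.
apply: (big_ind (fun V => V \in tau)) => // [A B HA HB|a _].
  by case: (HUI A B HA HB).
exact: principal_upset_open.
Qed.

Definition upset (A : {set X}) := [set c | [exists a in A, specialization a c]].
Definition downset x := [set a | specialization a x].

Lemma upset_open (A : {set X}) : upset A \in tau.
Proof.
apply: upward_closed_open => b c; rewrite !inE => /exists_inP[a Aa ab] bc.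
by apply/exists_inP; exists a; last exact: specialization_trans bc.
Qed.

Lemma subset_upset (A : {set X}) : A \subset upset A.
Proof.
apply/subsetP => a Aa; rewrite inE; apply/exists_inP.
by exists a; rewrite ?specialization_refl.
Qed.

Lemma downset_closed x : cls tau (downset x).
Proof.
apply: upward_closed_open => a b; rewrite !inE => ax ab.
by apply: contra ax; apply: specialization_trans ab.
Qed.

Lemma mem_downset x : x \in downset x.
Proof. by rewrite inE specialization_refl. Qed.

(* Up-closures are the smallest open supersets. *)
Lemma open_separation (A B : {set X}) :
  (exists U V, [/\ U \in tau, V \in tau, A \subset U, B \subset V & U :&: V = set0]) <->
  ~ exists a b c, [/\ a \in A, b \in B, specialization a c & specialization b c].
Proof.
split=> [[U [V [HU HV AU BV UV]]] [a [b [c [Aa Bb ac bc]]]]|noc].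
  have Uc : c \in U := open_upward HU (subsetP AU a Aa) ac.
  have Vc : c \in V := open_upward HV (subsetP BV b Bb) bc.
  have : c \in U :&: V by rewrite inE Uc Vc.
  by rewrite UV inE.
exists (upset A), (upset B); split; rewrite ?upset_open ?subset_upset //.
apply/setP => c; rewrite !inE; apply/andP => -[/exists_inP[a Aa ac] /exists_inP[b Bb bc]].
by apply: noc; exists a, b, c.
Qed.

Lemma T0_sepE x y :
  T0_sep tau x y <-> ~ (specialization x y /\ specialization y x).
Proof.
split=> [[U [HU [[Ux Uy]|[Uy Ux]]]] [xy yx]|nxy].
- by move: Uy; rewrite (open_upward HU Ux xy).
- by move: Ux; rewrite (open_upward HU Uy yx).
case xy: (specialization x y); first case yx: (specialization y x).
- by case: nxy.
- exists [set z | specialization y z]; split; first exact: principal_upset_open.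
  by right; rewrite !inE specialization_refl yx.
- exists [set z | specialization x z]; split; first exact: principal_upset_open.
  by left; rewrite !inE specialization_refl xy.
Qed.

Lemma T1_sepE x y :
  T1_sep tau x y <-> ~ (specialization x y \/ specialization y x).
Proof.
split=> [[U [V [HU [HV [Ux [Uy [Vy Vx]]]]]]] [xy|yx]|nxy].
- by move: Uy; rewrite (open_upward HU Ux xy).
- by move: Vx; rewrite (open_upward HV Vy yx).
exists [set z | specialization x z], [set z | specialization y z].
rewrite /opn !principal_upset_open !inE !specialization_refl.
by do ![split=> //]; apply/negP => ?; apply: nxy; auto.
Qed.

Lemma T2_sepE x y :
  T2_sep tau x y <-> ~ exists c, specialization x c /\ specialization y c.
Proof.
split=> [[U [V [HU [HV [Ux [Vy UV]]]]]] [c [xc yc]]|noc].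
  apply: (open_separation [set x] [set y]).1; first by exists U, V; rewrite !sub1set.
  by exists x, y, c; rewrite !in_set1 !eqxx.
have [|U [V [HU HV]]] := (open_separation [set x] [set y]).2.
  by move=> [a [b [c [/set1P-> /set1P-> xc yc]]]]; apply: noc; exists c.
by rewrite !sub1set => Ux Vy UV; exists U, V.
Qed.

Lemma T3a_sepE x y :
  T3a_sep tau x y <->
  ~ exists a b, specialization a x /\ specialization a b /\ specialization y b.
Proof.
split=> [[J [U [V [HJ [HU [HV [Jx [JU [Vy UV]]]]]]]]] [a [c [ax [ac yc]]]]|noc].
  apply: (open_separation J [set y]).1; first by exists U, V; rewrite sub1set.
  by exists a, y, c; rewrite in_set1 eqxx (closed_downward HJ Jx ax).
have [|U [V [HU HV JU]]] := (open_separation (downset x) [set y]).2.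
  by move=> [a [b [c [ax /set1P-> ac yc]]]]; apply: noc; exists a, c; rewrite inE in ax.
rewrite sub1set => Vy UV.
by exists (downset x), U, V; rewrite downset_closed mem_downset.
Qed.

Lemma T4_sepE x y :
  T4_sep tau x y <->
  ~ exists a b c, specialization a x /\ specialization b y /\
                  specialization a c /\ specialization b c.
Proof.
split=> [[J [K [U [V [HJ [HK [HU [HV [Jx [JU [Ky [KV UV]]]]]]]]]]]]
         [a [b [c [ax [yb [ac bc]]]]]]|noc].
  apply: (open_separation J K).1; first by exists U, V.
  by exists a, b, c; rewrite (closed_downward HJ Jx ax) (closed_downward HK Ky yb).
have [|U [V [HU HV JU KV UV]]] := (open_separation (downset x) (downset y)).2.
  by move=> [a [b [c]]]; rewrite !inE => -[ax yb ac bc]; apply: noc; exists a, b, c.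
by exists (downset x), (downset y), U, V; rewrite !downset_closed !mem_downset.
Qed.

Lemma sep_graph_specialization i x y :
  sep_graph i tau x y <-> preorder_graph i specialization x y.
Proof.
rewrite /sep_graph; case: i => /=.
- by rewrite T0_sepE not_not.
- by rewrite T1_sepE not_not.
- by rewrite T2_sepE not_not.
- by rewrite /T3'_sep T3b_sep_swap !T3a_sepE not_or_not.
- by rewrite /T3''_sep T3b_sep_swap !T3a_sepE not_and_not.
- by rewrite T4_sepE not_not.
Qed.

End Specialization.

Definition upset_topology (X : finType) (r : rel X) : {set {set X}} :=
  [set U : {set X} | [forall a in U, forall b, r a b ==> (b \in U)]].

Lemma upset_topologyP (X : finType) (r : rel X) (U : {set X}) :
  reflect (forall a b, a \in U -> r a b -> b \in U) (U \in upset_topology r).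
Proof.
rewrite inE; apply: (iffP forall_inP) => H a => [b Ua ab|Ua].
  by move/forallP/(_ b)/implyP: (H a Ua); apply.
by apply/forallP => b; apply/implyP; apply: H.
Qed.

Lemma upset_topology_is_topology (X : finType) (r : rel X) :
  is_topology (upset_topology r).
Proof.
split; first by apply/upset_topologyP => a b; rewrite inE.
split; first by apply/upset_topologyP => a b; rewrite inE.
move=> U V /upset_topologyP HU /upset_topologyP HV.
split; apply/upset_topologyP => a b; rewrite !inE.
  by case/orP => [Ua|Va] ab; [rewrite (HU _ _ Ua ab) | rewrite (HV _ _ Va ab) orbT].
by case/andP => Ua Va ab; rewrite (HU _ _ Ua ab) (HV _ _ Va ab).
Qed.

Lemma specialization_upset_topology (X : finType) (r : rel X) :
  is_preorder r -> specialization (upset_topology r) = r.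
Proof.
move=> [r_refl r_trans]; apply: functional_extensionality => x.
apply: functional_extensionality => y; apply/specializationP/idP => [xU|xy U].
  have up_x : [set z | r x z] \in upset_topology r.
    by apply/upset_topologyP => a b; rewrite !inE; apply: r_trans.
  by have := xU _ up_x; rewrite !inE r_refl; apply.
by move/upset_topologyP => HU Ux; apply: HU Ux xy.
Qed.

Lemma graph_iso_eqr (T1 T2 : finType)
    (e1 : T1 -> T1 -> Prop) (e2 e3 : T2 -> T2 -> Prop) :
  graph_iso e1 e2 -> (forall x y, e2 x y <-> e3 x y) -> graph_iso e1 e3.
Proof. by move=> [f [f_bij f_iso]] e23; exists f; split=> // x y; rewrite f_iso. Qed.

Lemma in_Gclass_preorder i (T : finType) (e : T -> T -> Prop) :
  in_Gclass i e <-> is_preorder_graph i e.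
Proof.
split=> [[X [tau [tau_top iso]]]|[X [r [r_pre iso]]]].
  exists X, (specialization tau); split; first exact: specialization_preorder.
  by apply: graph_iso_eqr iso _ => x y; apply: sep_graph_specialization.
exists X, (upset_topology r); split; first exact: upset_topology_is_topology.
apply: graph_iso_eqr iso _ => x y.
rewrite sep_graph_specialization ?specialization_upset_topology //.
exact: upset_topology_is_topology.
Qed.

Section Tiebreak.

Variables (X : finType) (r : rel X).
Hypotheses (r_refl : reflexive r) (r_trans : transitive r).

Definition tiebreak : rel X :=
  fun x y => r x y && (r y x ==> (enum_rank x <= enum_rank y)).

Lemma tiebreakW x y : tiebreak x y -> r x y.
Proof. by case/andP. Qed.

Lemma tiebreak_poset : is_poset tiebreak.
Proof.
split; first by move=> x; rewrite /tiebreak r_refl leqnn.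
split=> [x y /andP[/andP[xy yx_le] /andP[yx xy_le]]|
          y x z /andP[xy xy_le] /andP[yz yz_le]].
  move: xy_le yx_le; rewrite xy yx /= => yx_le xy_le.
  by apply/enum_rank_inj/val_inj/eqP; rewrite eqn_leq xy_le yx_le.
rewrite /tiebreak (r_trans xy yz); apply/implyP => zx.
move: xy_le yz_le; rewrite (r_trans yz zx) (r_trans zx xy) /=.
exact: leq_trans.
Qed.

Lemma tiebreak_total x y : r x y -> tiebreak x y \/ tiebreak y x.
Proof.
move=> xy; rewrite /tiebreak xy /=; case yx: (r y x) => /=; last by left.
by case: (leqP (enum_rank x) (enum_rank y)) => [|/ltnW]; auto.
Qed.

Lemma tiebreak_min a : exists a', forall w, r a w -> tiebreak a' w.
Proof.
have Pa : [pred i | r i a && r a i] a by rewrite /= r_refl.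
case: (arg_minnP (fun i => nat_of_ord (enum_rank i)) Pa) => a' /andP[a'a aa'] a'_min.
exists a' => w aw; rewrite /tiebreak (r_trans a'a aw); apply/implyP => wa'.
by apply: a'_min; rewrite /= (r_trans wa' a'a) aw.
Qed.

Lemma tiebreak_max b : exists2 b', r b b' & forall w, r w b -> tiebreak w b'.
Proof.
have Pb : [pred i | r i b && r b i] b by rewrite /= r_refl.
case: (arg_maxnP (fun i => nat_of_ord (enum_rank i)) Pb) => b' /andP[b'b bb'] b'_max.
exists b' => // w wb; rewrite /tiebreak (r_trans wb bb'); apply/implyP => b'w.
by apply: b'_max; rewrite /= wb (r_trans bb' b'w).
Qed.

Lemma preorder_graph_tiebreak i x y : i <> ST0 ->
  preorder_graph i r x y <-> preorder_graph i tiebreak x y.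
Proof.
have down_up u v : (exists a b, r a u /\ r a b /\ r v b) <->
                   (exists a b, tiebreak a u /\ tiebreak a b /\ tiebreak v b).
  split=> [[a [b [au [ab vb]]]]|[a [b [au [ab vb]]]]]; last first.
    by exists a, b; rewrite !(tiebreakW au, tiebreakW ab, tiebreakW vb).
  have [a' Ha'] := tiebreak_min a; have [b' bb' Hb'] := tiebreak_max b.
  exists a', b'; split; first exact: Ha'.
  by split; [apply/Ha'/(r_trans ab bb') | exact: Hb'].
case: i => //= _.
- split=> -[xy H]; split=> //; last by case: H => /tiebreakW; auto.
  by case: H => [/tiebreak_total|/tiebreak_total []]; auto.
- split=> -[xy [z [xz yz]]]; split=> //; last by exists z; rewrite !tiebreakW.
  by have [z' _ Hz'] := tiebreak_max z; exists z'; rewrite !Hz'.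
- by rewrite /half_closed_ub_graph !down_up.
- by rewrite /fully_closed_ub_graph !down_up.
- split=> -[xy [a [b [c [ax [yb [ac bc]]]]]]]; split=> //; last first.
    by exists a, b, c; rewrite !tiebreakW.
  have [a' Ha'] := tiebreak_min a; have [b' Hb'] := tiebreak_min b.
  have [c' cc' _] := tiebreak_max c.
  exists a', b', c'; do 2 (split; first by [apply: Ha' | apply: Hb']).
  by split; [apply/Ha'/(r_trans ac cc') | apply/Hb'/(r_trans bc cc')].
Qed.

End Tiebreak.

Lemma poset_graph_preorder_graph i (T : finType) (e : T -> T -> Prop) : i <> ST0 ->
  is_poset_graph (preorder_graph i) e <-> is_preorder_graph i e.
Proof.
move=> i0; split=> [[X [le [[le_refl [_ le_trans]] iso]]]|
                    [X [r [[r_refl r_trans] iso]]]]; first by exists X, le.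
exists X, (tiebreak r); split; first exact: tiebreak_poset.
by apply: graph_iso_eqr iso _ => x y; apply: preorder_graph_tiebreak.
Qed.

Lemma indistinguishability_union_of_cliques (X : finType) (r : rel X) :
  is_preorder r -> disjoint_union_of_cliques (preorder_graph ST0 r).
Proof.
move=> [r_refl r_trans]; pose class x := [set z | r x z && r z x].
have rank_inj : injective (fun A : {set X} => nat_of_ord (enum_rank A)).
  by move=> A B /val_inj/enum_rank_inj.
exists (fun x => nat_of_ord (enum_rank (class x))) => x y neq_xy /=.
split=> [[_ [xy yx]]|/rank_inj cxy].
  congr (nat_of_ord (enum_rank _)); apply/setP => z; rewrite !inE.
  apply/andP/andP => -[? ?].
    by split; [apply: r_trans yx _ | apply: r_trans xy].
  by split; [apply: r_trans xy _ | apply: r_trans yx].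
have : x \in class y by rewrite -cxy inE r_refl.
by rewrite inE => /andP[].
Qed.

Lemma graph_iso_union_of_cliques (T1 T2 : finType)
    (e1 : T1 -> T1 -> Prop) (e2 : T2 -> T2 -> Prop) :
  graph_iso e1 e2 -> disjoint_union_of_cliques e2 -> disjoint_union_of_cliques e1.
Proof.
move=> [f [f_bij f_iso]] [c Hc]; exists (c \o f) => x y xy /=.
by rewrite f_iso Hc // => /(bij_inj f_bij).
Qed.

Lemma union_of_cliques_preorder_graph (T : finType) (e : T -> T -> Prop) :
  (forall x, ~ e x x) ->
  disjoint_union_of_cliques e <-> is_preorder_graph ST0 e.
Proof.
move=> e_irr; split=> [[c Hc]|[X [r [r_pre iso]]]]; last first.
  exact: graph_iso_union_of_cliques iso (indistinguishability_union_of_cliques r_pre).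
exists T, [rel x y | c x == c y]; split.
  by split=> [x|y x z]; rewrite /= ?eqxx // => /eqP-> /eqP->.
exists id; split=> [|x y /=]; first by exists id.
have [<-|xy] := eqVneq x y; first by split=> [/e_irr|[]].
rewrite Hc; last exact/eqP.
by split=> [cxy|[_ [/eqP]]] //; rewrite cxy eqxx; split=> //; apply/eqP.
Qed.

Theorem theorem1p3 (T : finType) (e : T -> T -> Prop) :
  simple_graph e ->
  (in_Gclass ST0 e <-> disjoint_union_of_cliques e) /\
  (in_Gclass ST1 e <-> is_poset_graph comparability_graph e) /\
  (in_Gclass ST2 e <-> is_poset_graph ub_graph e) /\
  (in_Gclass ST3' e <-> is_poset_graph half_closed_ub_graph e) /\
  (in_Gclass ST3'' e <-> is_poset_graph fully_closed_ub_graph e) /\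
  (in_Gclass ST4 e <-> is_poset_graph extended_closed_ub_graph e).
Proof.
move=> [e_irr _].
have poset i : i <> ST0 -> in_Gclass i e <-> is_poset_graph (preorder_graph i) e.
  by move=> i0; rewrite in_Gclass_preorder poset_graph_preorder_graph.
split; first by rewrite in_Gclass_preorder union_of_cliques_preorder_graph.
by do 4 (split; first exact: poset); exact: poset.
Qed.
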